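(* Let $m_1,\dots,m_r,n$ be positive integers with $m=\sum_{i=1}^r m_i\le n$, and suppose that $\sum_{i=1}^r\lfloor m_i n/(m+1)\rfloor\ge\lfloor mn/(m+1)\rfloor$ and $m_i n/(m+1)\ge\lceil m_i n/(m+2)\rceil$ for all $i\in[r]$. Let $h$ be the least integer $t\ge m+2$ such that either there is some $i\in[r]$ with $\frac{m_i n}{t}<\big\lceil \frac{m_i n}{t+1}\big\rceil$, or there are indices $i\ne j$ such that $t$ divides neither $m_i n$ nor $m_j n$. Then $K_{m_1 n,\dots,m_r n}$ is equitably $k$-colorable for every integer $k$ with $\sum_{i=1}^r\lceil m_i n/h\rceil\le k\le\lceil mn/(m+1)\rceil-1$.
   Context: A (proper) $k$-coloring of a graph $G$ is a map $f:V(G)\to\{1,\dots,k\}$ with $f(x)\ne f(y)$ whenever $xy\in E(G)$; an equitable $k$-coloring is a $k$-coloring in which any two color classes differ in size by at most $1$; $G$ is equitably $k$-colorable if it has one. $K_{a_1,\dots,a_r}$ denotes the complete multipartite graph with parts of sizes $a_1,\dots,a_r$. $[r]=\{1,\dots,r\}$. *)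

From mathcomp Require Import all_boot.
Set Implicit Arguments. Unset Strict Implicit. Unset Printing Implicit Defensive.

Definition ceil_div (a b : nat) : nat := (a + b.-1) %/ b.

Definition proper_coloring (T : finType) (e : rel T) (k : nat) (f : T -> 'I_k) :=
  forall x y : T, e x y -> f x != f y.

Definition equitable_coloring (T : finType) (k : nat) (f : T -> 'I_k) :=
  forall c c' : 'I_k, #|[pred x | f x == c]| <= #|[pred x | f x == c']|.+1.

Definition equitably_colorable (T : finType) (e : rel T) (k : nat) :=
  exists f : T -> 'I_k, proper_coloring e f /\ equitable_coloring f.

(* complete multipartite graph K_{a_1,...,a_r}: vertices are pairs (i, v)
   with v in part i (of size a i); two vertices adjacent iff in different parts *)
Definition cmp_vertex (r : nat) (a : 'I_r -> nat) : finType := {i : 'I_r & 'I_(a i)}.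
Definition cmp_adj (r : nat) (a : 'I_r -> nat) : rel (cmp_vertex a) :=
  fun x y => tag x != tag y.

Definition h_prop (r : nat) (mm : 'I_r -> nat) (n t : nat) : Prop :=
  (exists i : 'I_r, mm i * n < t * ceil_div (mm i * n) t.+1) \/
  (exists i j : 'I_r, i != j /\ ~~ (t %| mm i * n) /\ ~~ (t %| mm j * n)).

(* Write a_i = m_i n and M = m_1 + ... + m_r.  An equitable coloring of a
   complete multipartite graph uses every color inside a single part, so it
   amounts to cutting every part a_i into kk_i blocks whose sizes all lie in
   {s, s+1} for one common s; this is possible iff s kk_i <= a_i <= (s+1) kk_i,
   i.e. ceil(a_i/(s+1)) <= kk_i <= floor(a_i/s)  ([equitable_blowup]).
   Hence K is equitably k-colorable as soon as, for some s,
   lo(s+1) <= k <= hi(s)  with  lo t = sum_i ceil(a_i/t), hi s = sum_i floor(a_i/s),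
   and every part admits such a cut  ([distribute]).
   The hypotheses of the theorem give k <= hi(M+1) and lo(h) <= k; below h,
   every part admits the cut (hypothesis hceil at s = M+1, minimality of h
   otherwise), and at most one a_i is not divisible by t, whence
   lo(t) <= hi(t) + 1  ([sum_ceil_div_le]).  A discrete intermediate value
   argument ([interval_search]) then produces the required s in [M+1, h). *)

From mathcomp Require Import all_boot zify.
Set Implicit Arguments. Unset Strict Implicit. Unset Printing Implicit Defensive.

Lemma ceil_div_leqP a b c : 0 < b -> (ceil_div a b <= c) = (a <= c * b).
Proof.
move=> b_gt0; rewrite /ceil_div -ltnS ltn_divLR // mulSn.
by apply/idP/idP; lia.
Qed.

Lemma ceil_div_leq_floor a b : 0 < b -> ceil_div a b <= (a %/ b).+1.
Proof. by move=> b_gt0; rewrite ceil_div_leqP // ltnW // ltn_ceil. Qed.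

Lemma ceil_div_dvd a b : 0 < b -> b %| a -> ceil_div a b = a %/ b.
Proof.
move=> b_gt0 /divnK a_eq; rewrite /ceil_div -{1}a_eq divnMDl //.
by rewrite [b.-1 %/ b]divn_small ?addn0 // ltn_predL.
Qed.

Lemma distribute (I : finType) (lo hi : I -> nat) (k : nat) :
  (forall i, lo i <= hi i) ->
  \sum_i lo i <= k <= \sum_i hi i ->
  exists kk : I -> nat, (forall i, lo i <= kk i <= hi i) /\ \sum_i kk i = k.
Proof.
move=> lo_hi; have : uniq (index_enum I) by exact: index_enum_uniq.
elim: (index_enum I) k => [|x s IHs] k /=.
  rewrite !big_nil => _ /andP[_]; rewrite leqn0 => /eqP->.
  by exists lo; rewrite big_nil; split=> // i; rewrite leqnn lo_hi.
case/andP=> x_notin_s s_uniq; rewrite !big_cons => /andP[lo_k k_hi].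
(* give x as little as possible while leaving a feasible remainder for s *)
pose kx := maxn (lo x) (k - \sum_(i <- s) hi i).
have lo_hi_s : \sum_(i <- s) lo i <= \sum_(i <- s) hi i by exact: leq_sum.
have [kk [kk_bnd kk_sum]] : exists kk : I -> nat,
    (forall i, lo i <= kk i <= hi i) /\ \sum_(i <- s) kk i = k - kx.
  by apply: IHs => //; have := lo_hi x; rewrite /kx; lia.
exists (fun j => if j == x then kx else kk j); split.
  by move=> j; case: eqP => // ->; have := lo_hi x; rewrite /kx; lia.
rewrite big_cons eqxx (eq_big_seq kk); last first.
  by move=> j j_in_s; case: eqP j_in_s => // ->; rewrite (negbTE x_notin_s).
by rewrite kk_sum; have := lo_hi x; rewrite /kx; lia.
Qed.

Lemma card_residue (A q d s : nat) : d < q -> s * q <= A <= s.+1 * q ->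
  s <= #|[pred v : 'I_A | v %% q == d]| <= s.+1.
Proof.
move=> d_lt_q /andP[sq_le_A A_le]; have q_gt0 : 0 < q by exact: leq_ltn_trans d_lt_q.
apply/andP; split.
- have shift_lt (w : 'I_s) : w * q + d < A.
    by apply: leq_trans sq_le_A; have := ltn_ord w; nia.
  pose g (w : 'I_s) : 'I_A := Ordinal (shift_lt w).
  have g_inj : injective g.
    move=> w1 w2 /(congr1 val) /= /eqP; rewrite eqn_add2r eqn_pmul2r // => /eqP.
    exact: val_inj.
  rewrite -[X in X <= _](card_ord s) -cardsT -(card_imset _ g_inj).
  apply: subset_leq_card; apply/subsetP => _ /imsetP[w _ ->].
  by rewrite inE /= modnMDl modn_small.
- have quot_lt (v : 'I_A) : v %/ q < s.+1.
    by rewrite ltn_divLR //; exact: leq_trans (ltn_ord v) A_le.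
  pose g (v : 'I_A) : 'I_s.+1 := Ordinal (quot_lt v).
  have g_inj : {in [pred v : 'I_A | v %% q == d] &, injective g}.
    move=> v1 v2; rewrite !inE => /eqP v1_mod /eqP v2_mod /(congr1 val) /= eq_quot.
    by apply: val_inj; rewrite /= (divn_eq v1 q) (divn_eq v2 q) eq_quot v1_mod v2_mod.
  by rewrite -(card_in_imset g_inj) -[X in _ <= X](card_ord s.+1) max_card.
Qed.

(* Cutting part i into kk_i residue classes mod kk_i, each of size s or s+1,
   and giving every class its own color equitably colors K_{a_1,...,a_r}
   with sum_i kk_i colors. *)
Lemma equitable_blowup (r : nat) (a kk : 'I_r -> nat) (s : nat) :
  (forall i, 0 < a i) -> (forall i, s * kk i <= a i <= s.+1 * kk i) ->
  equitably_colorable (@cmp_adj r a) (\sum_i kk i).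
Proof.
move=> a_gt0 kk_bnd.
have kk_gt0 i : 0 < kk i by have := a_gt0 i; have := kk_bnd i; nia.
(* the color classes: a part i together with a residue mod kk_i *)
pose S := {i : 'I_r & 'I_(kk i)}.
have card_S : #|{: S}| = \sum_i kk i.
  by rewrite card_tagged sumnE big_map big_enum; apply: eq_bigr => i _; rewrite card_ord.
pose slot (x : cmp_vertex a) : S :=
  Tagged (fun i => 'I_(kk i)) (Ordinal (ltn_pmod (tagged x) (kk_gt0 (tag x)))).
pose col (y : S) : 'I_(\sum_i kk i) := cast_ord card_S (enum_rank y).
have col_inj : injective col by move=> y1 y2 /cast_ord_inj /enum_rank_inj.
exists (col \o slot); split.
  move=> x y; rewrite /cmp_adj /= (inj_eq col_inj).
  by apply: contra => /eqP slot_eq; have /= -> := congr1 tag slot_eq.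
suff class_size c : s <= #|[pred x | (col \o slot) x == c]| <= s.+1.
  by move=> c c'; have := class_size c; have := class_size c'; lia.
have [[i0 d] ->] : exists y, c = col y.
  by exists (enum_val (cast_ord (esym card_S) c)); rewrite /col enum_valK cast_ordKV.
have -> : #|[pred x | (col \o slot) x == col (Tagged _ d)]| =
          #|Tagged (fun i => 'I_(a i)) @: [pred v : 'I_(a i0) | v %% kk i0 == d]|.
  apply: eq_card => -[i v]; rewrite inE /= (inj_eq col_inj).
  apply/eqP/imsetP => [slot_eq | [w w_res vertex_eq]].
  - have /= tag_i := congr1 tag slot_eq; subst i.
    exists v => //; rewrite inE; apply/eqP.
    by have := eq_from_Tagged slot_eq => <-.
  - have /= tag_i := congr1 tag vertex_eq; subst i.
    rewrite (eq_from_Tagged vertex_eq); congr (Tagged _ _); apply: val_inj => /=.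
    by move: w_res; rewrite inE => /eqP.
rewrite card_imset; last exact: eq_from_Tagged.
exact: card_residue (ltn_ord d) (kk_bnd i0).
Qed.

Lemma sum_ceil_div_le (I : finType) (a : I -> nat) (t : nat) : 0 < t ->
  (forall i j, i != j -> (t %| a i) || (t %| a j)) ->
  \sum_i ceil_div (a i) t <= (\sum_i a i %/ t).+1.
Proof.
move=> t_gt0 dvd_pair; case: (pickP [pred i | ~~ (t %| a i)]) => [i0 /= i0_ndvd | all_dvd].
  rewrite (bigD1 i0) // [X in _ <= X.+1](bigD1 i0) //= -addSn.
  rewrite leq_add ?ceil_div_leq_floor //; apply/eq_leq/eq_bigr => j j_ne_i0.
  apply: ceil_div_dvd => //.
  by have := dvd_pair i0 j; rewrite eq_sym j_ne_i0 (negbTE i0_ndvd); apply.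
rewrite (eq_bigr (fun i => a i %/ t)) // => i _.
by apply: ceil_div_dvd => //; apply: negbFE; exact: all_dvd.
Qed.

(* Discrete intermediate value: if k <= hi a, lo b <= k and lo never exceeds
   hi + 1 strictly between a and b, then lo (s+1) <= k <= hi s for some s in
   [a, b); take s maximal with k <= hi s. *)
Lemma interval_search (lo hi : nat -> nat) (a b k : nat) :
  a < b -> k <= hi a -> lo b <= k ->
  (forall t, a < t < b -> lo t <= (hi t).+1) ->
  exists2 s, a <= s < b & lo s.+1 <= k <= hi s.
Proof.
move=> a_lt_b k_hi_a lo_b_k lo_hi.
pose P s := (a <= s < b) && (k <= hi s).
have exP : exists s, P s by exists a; rewrite /P leqnn a_lt_b k_hi_a.
have ubP s : P s -> s <= b by case/andP=> /andP[_ /ltnW].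
case: (ex_maxnP exP ubP) => s /andP[s_range k_hi_s] s_max.
exists s => //; rewrite k_hi_s andbT.
have [-> //|s1_ne_b] := eqVneq s.+1 b.
have s1_lt_b : s.+1 < b by move: s_range; lia.
have hi_s1 : hi s.+1 < k.
  rewrite ltnNge; apply/negP => k_hi_s1; suff : s < s by rewrite ltnn.
  apply: s_max.
  by rewrite /P k_hi_s1 s1_lt_b !andbT; case/andP: s_range => a_le_s _; exact: leqW.
by apply: leq_trans (lo_hi _ _) hi_s1; move: s_range; lia.
Qed.

Theorem mainTheorem6 (r : nat) (mm : 'I_r -> nat) (n : nat)
  (hr : 0 < r) (hmpos : forall i, 0 < mm i) (hn : 0 < n)
  (hmn : \sum_(i < r) mm i <= n)
  (hfloor : \sum_(i < r) (mm i * n %/ (\sum_(j < r) mm j).+1)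
              >= (\sum_(j < r) mm j) * n %/ (\sum_(j < r) mm j).+1)
  (hceil : forall i, (\sum_(j < r) mm j).+1 * ceil_div (mm i * n) (\sum_(j < r) mm j).+2
              <= mm i * n)
  (h : nat)
  (hge : (\sum_(j < r) mm j).+2 <= h)
  (hP : h_prop mm n h)
  (hmin : forall t, (\sum_(j < r) mm j).+2 <= t -> t < h -> ~ h_prop mm n t) :
  forall k : nat,
    \sum_(i < r) ceil_div (mm i * n) h <= k ->
    k < ceil_div ((\sum_(j < r) mm j) * n) (\sum_(j < r) mm j).+1 ->
    equitably_colorable (@cmp_adj r (fun i => mm i * n)) k.
Proof.
move=> k lo_h_k k_lt; set M := \sum_(j < r) mm j in hfloor hceil hge hmin k_lt.
pose lo t := \sum_i ceil_div (mm i * n) t.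
pose hi s := \sum_i mm i * n %/ s.
have block_sizes s : M < s < h -> forall i, ceil_div (mm i * n) s.+1 <= mm i * n %/ s.
  move=> /andP[M_lt_s s_lt_h] i; rewrite leq_divRL ?(leq_ltn_trans _ M_lt_s) // mulnC.
  have [-> |s_ne_M1] := eqVneq s M.+1; first exact: hceil.
  rewrite leqNgt; apply/negP => too_small; apply: (hmin s) => //; last by left; exists i.
  by move: M_lt_s s_ne_M1; lia.
have dvd_pair t : M.+1 < t < h -> forall i j, i != j -> (t %| mm i * n) || (t %| mm j * n).
  move=> /andP[M1_lt_t t_lt_h] i j i_ne_j; case: (boolP (t %| mm i * n)) => //= i_ndvd.
  by apply/negPn/negP => j_ndvd; apply: (hmin t M1_lt_t t_lt_h); right; exists i, j.
have lo_hi_step t : M.+1 < t < h -> lo t <= (hi t).+1.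
  move=> t_range; apply: sum_ceil_div_le (dvd_pair t t_range).
  by case/andP: t_range => M1_lt_t _; exact: leq_ltn_trans M1_lt_t.
have k_le_hi : k <= hi M.+1.
  by apply: leq_trans hfloor; have := ceil_div_leq_floor (M * n) (ltn0Sn M); lia.
have [s s_range k_bounds] := interval_search hge k_le_hi lo_h_k lo_hi_step.
have [kk [kk_bnd <-]] := distribute (block_sizes s s_range) k_bounds.
apply: (@equitable_blowup r _ kk s) => [i | i]; first by rewrite muln_gt0 hmpos.
have s_gt0 : 0 < s by case/andP: s_range => M_lt_s _; exact: leq_ltn_trans M_lt_s.
by have := kk_bnd i; rewrite ceil_div_leqP // leq_divRL //; nia.
Qed.
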